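(* Let $R>0$, $h>0$, $g_1>0$ be reals and $\lambda_2>0$, and let $G$ be an exponential random variable with rate $\lambda_2$ (representing $g_2^2$). For $\Delta>0$ define (logarithms base $2$, $[x]^+=\max\{x,0\}$) $$R_{\mathrm{QMF}}(\Delta)=\Big[\min\Big\{\log\Big(1+\frac{h^2}{1+\Delta}+G\Big),\ \log(1+g_1^2+G)-\log\frac{1+\Delta}{\Delta}\Big\}\Big]^+,$$ and the conditional outage probability $P(\Delta)=\Pr\{R>R_{\mathrm{QMF}}(\Delta)\}$. Then $P(\Delta)$ is minimized over $\Delta>0$ at $$\Delta^*=\frac{\sqrt{(g_1^2-h^2-2^R)^2+4g_1^22^R}-(g_1^2-h^2-2^R)}{2g_1^2},$$ the positive root of $g_1^2\Delta^2+(g_1^2-h^2-2^R)\Delta-2^R=0$.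
   Context: This is the full-duplex Gaussian single-relay channel ($Y_r=\mathsf hX+Z_r$, $Y=\mathsf g_1X_r+\mathsf g_2X+Z$, unit powers and noise) under Rayleigh fading, where the relay knows the realizations of its incoming and outgoing magnitudes $h=|\mathsf h|$, $g_1=|\mathsf g_1|$ but not $g_2=|\mathsf g_2|$, for which $g_2^2$ is exponential with rate $\lambda_2$. The relay quantizes with a Gaussian vector quantizer of distortion $\Delta$, and $R_{\mathrm{QMF}}(\Delta)$ is the resulting quantize-map-and-forward rate; $P(\Delta)$ is the outage probability at rate $R$ conditioned on $h,g_1$. *)

From HB Require Import structures.
From mathcomp Require Import all_boot all_order all_algebra.
From mathcomp Require Import all_classical all_reals all_analysis.
Set Implicit Arguments. Unset Strict Implicit. Unset Printing Implicit Defensive.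
Import Order.TTheory GRing.Theory Num.Theory.
Local Open Scope ring_scope.
Local Open Scope classical_set_scope.

Definition log2 {R : realType} (x : R) : R := ln x / ln 2.

Definition pospart {R : realType} (x : R) : R := Num.max x 0.

(* QMF rate as a function of the distortion Delta and of the realization g = g2^2 *)
Definition R_QMF {R : realType} (h g1 Delta g : R) : R :=
  pospart (Num.min (log2 (1 + h ^+ 2 / (1 + Delta) + g))
                   (log2 (1 + g1 ^+ 2 + g) - log2 ((1 + Delta) / Delta))).

Definition outage {R : realType} {d : measure_display} {T : measurableType d}
  (P : probability T R) (G : T -> R) (Rt h g1 Delta : R) : \bar R :=
  P [set t | Rt > R_QMF h g1 Delta (G t)].

Definition Delta_star {R : realType} (Rt h g1 : R) : R :=
  let b := g1 ^+ 2 - h ^+ 2 - 2 `^ Rt in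
  (Num.sqrt (b ^+ 2 + 4 * g1 ^+ 2 * 2 `^ Rt) - b) / (2 * g1 ^+ 2).

From HB Require Import structures.
From mathcomp Require Import all_boot all_order all_algebra.
From mathcomp Require Import all_classical all_reals all_analysis.
From mathcomp Require Import measurable_realfun ring lra.
Set Implicit Arguments. Unset Strict Implicit. Unset Printing Implicit Defensive.
Import Order.TTheory GRing.Theory Num.Theory.
Local Open Scope ring_scope.
Local Open Scope classical_set_scope.

(* For a realization g = g2^2 >= 0, the QMF rate drops below the target
   rate exactly when g lies below the larger of two thresholds: one coming
   from the broadcast cut, which increases with the distortion, and one from
   the multiple-access cut, which decreases with it.  The larger of an
   increasing and a decreasing function is smallest where they cross, and the
   crossing point is the positive root Delta* of the quadratic.  Hence the
   outage event at Delta* is contained in the outage event at any other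
   Delta, up to the null event {G < 0}. *)

Section quadratic_root.
Variable R : rcfType.

Definition pos_quad_root (a b c : R) : R :=
  (Num.sqrt (b ^+ 2 + 4 * a * c) - b) / (2 * a).

Variables (a b c : R).
Hypotheses (a_gt0 : 0 < a) (c_gt0 : 0 < c).

Let four_ac_gt0 : 0 < 4 * a * c.
Proof. by rewrite !mulr_gt0. Qed.

Let disc_gt0 : 0 < b ^+ 2 + 4 * a * c.
Proof. by have := sqr_ge0 b; have := four_ac_gt0; lra. Qed.

Lemma pos_quad_root_gt0 : 0 < pos_quad_root a b c.
Proof.
rewrite /pos_quad_root divr_gt0 ?mulr_gt0 // subr_gt0.
apply: (le_lt_trans (ler_norm b)).
by rewrite -sqrtr_sqr ltr_sqrt // ltrDl.
Qed.

Lemma pos_quad_rootE :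
  a * pos_quad_root a b c ^+ 2 + b * pos_quad_root a b c - c = 0.
Proof.
rewrite /pos_quad_root.
set s := Num.sqrt _; have s2 : s ^+ 2 = b ^+ 2 + 4 * a * c by rewrite sqr_sqrtr ?ltW.
have -> : a * ((s - b) / (2 * a)) ^+ 2 + b * ((s - b) / (2 * a)) - c
    = (s ^+ 2 - (b ^+ 2 + 4 * a * c)) / (4 * a) by field; rewrite gt_eqF.
by rewrite s2 subrr mul0r.
Qed.

End quadratic_root.

Lemma Delta_starE (R : realType) (Rt h g1 : R) :
  Delta_star Rt h g1 = pos_quad_root (g1 ^+ 2) (g1 ^+ 2 - h ^+ 2 - 2 `^ Rt) (2 `^ Rt).
Proof. by []. Qed.

Lemma max_at_crossing_le (R : realDomainType) (f g : R -> R) (x0 x : R) :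
  f x0 = g x0 -> (x0 <= x -> f x0 <= f x) -> (x <= x0 -> g x0 <= g x) ->
  Num.max (f x0) (g x0) <= Num.max (f x) (g x).
Proof.
move=> fg0 f_incr g_decr; rewrite -fg0 maxxx le_max.
have [/f_incr -> // | /ltW /g_decr] := lerP x0 x.
by rewrite fg0 => ->; rewrite orbT.
Qed.

Lemma log2_ltE (R : realType) (x c : R) : 0 < x -> (log2 x < c) = (x < 2 `^ c).
Proof.
move=> x_gt0; have ln2_gt0 : 0 < ln (2 : R) by rewrite ln_gt0 ?ltr1n.
by rewrite /log2 ltr_pdivrMr // -ln_powR ltr_ln // posrE powR_gt0.
Qed.

Section outage_thresholds.
Variables (R : realType) (Rt h g1 : R).

Definition bc_threshold (D : R) : R := 2 `^ Rt - 1 - h ^+ 2 / (1 + D).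

Definition mac_threshold (D : R) : R := 2 `^ Rt * (1 + D) / D - 1 - g1 ^+ 2.

Lemma R_QMF_ltE (D g : R) : 0 < Rt -> 0 < D -> 0 <= g ->
  (Rt > R_QMF h g1 D g) = (g < Num.max (bc_threshold D) (mac_threshold D)).
Proof.
move=> Rt_gt0 D_gt0 g_ge0.
have D1_gt0 : 0 < 1 + D by lra.
have hD_ge0 : 0 <= h ^+ 2 / (1 + D) by rewrite divr_ge0 ?sqr_ge0 ?ltW.
have g1_ge0 : 0 <= g1 ^+ 2 by rewrite sqr_ge0.
have ratio_gt0 : 0 < (1 + D) / D by rewrite divr_gt0.
rewrite /R_QMF /pospart gt_max Rt_gt0 andbT gt_min lt_max.
congr orb.
  by rewrite log2_ltE /bc_threshold; [apply/idP/idP; lra | lra].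
have -> : log2 (1 + g1 ^+ 2 + g) - log2 ((1 + D) / D)
    = log2 ((1 + g1 ^+ 2 + g) / ((1 + D) / D)).
  by rewrite /log2 -mulrBl [in RHS]ln_div ?posrE //; lra.
rewrite log2_ltE ?divr_gt0 //; last by lra.
by rewrite ltr_pdivrMr // /mac_threshold mulrA; apply/idP/idP; lra.
Qed.

Lemma bc_threshold_nondecr (D1 D2 : R) : -1 < D1 -> D1 <= D2 ->
  bc_threshold D1 <= bc_threshold D2.
Proof.
move=> D1_gtN1 D12; rewrite lerD2l lerN2 ler_wpM2l ?sqr_ge0 //.
by rewrite lef_pV2 ?posrE; lra.
Qed.

Lemma mac_threshold_nonincr (D1 D2 : R) : 0 < D1 -> D1 <= D2 ->
  mac_threshold D2 <= mac_threshold D1.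
Proof.
move=> D1_gt0 D12; have D2_gt0 : 0 < D2 by lra.
have splitE (x : R) : 0 < x -> 2 `^ Rt * (1 + x) / x = 2 `^ Rt + 2 `^ Rt * x^-1.
  by move=> x_gt0; field; rewrite gt_eqF.
rewrite /mac_threshold !splitE // !lerD2r lerD2l ler_wpM2l ?powR_ge0 //.
by rewrite lef_pV2.
Qed.

Lemma bc_eq_mac_threshold (D : R) : 0 < D ->
  g1 ^+ 2 * D ^+ 2 + (g1 ^+ 2 - h ^+ 2 - 2 `^ Rt) * D - 2 `^ Rt = 0 ->
  bc_threshold D = mac_threshold D.
Proof.
move=> D_gt0 quad; apply/eqP; rewrite -subr_eq0; apply/eqP.
have -> : bc_threshold D - mac_threshold D
    = (g1 ^+ 2 * D ^+ 2 + (g1 ^+ 2 - h ^+ 2 - 2 `^ Rt) * D - 2 `^ Rt) / (D * (1 + D)).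
  by rewrite /bc_threshold /mac_threshold; field; rewrite !gt_eqF //; lra.
by rewrite quad mul0r.
Qed.

Lemma lt_R_QMF_at_crossing (Ds D g : R) : 0 < Rt -> 0 < Ds -> 0 < D -> 0 <= g ->
  g1 ^+ 2 * Ds ^+ 2 + (g1 ^+ 2 - h ^+ 2 - 2 `^ Rt) * Ds - 2 `^ Rt = 0 ->
  Rt > R_QMF h g1 Ds g -> Rt > R_QMF h g1 D g.
Proof.
move=> Rt_gt0 Ds_gt0 D_gt0 g_ge0 /(bc_eq_mac_threshold Ds_gt0) cross.
rewrite !R_QMF_ltE // => /lt_le_trans; apply.
apply: (max_at_crossing_le cross) => [DsD | DDs].
  by apply: bc_threshold_nondecr => //; lra.
exact: mac_threshold_nonincr.
Qed.

End outage_thresholds.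

Lemma measurable_log2 (R : realType) : measurable_fun setT (@log2 R).
Proof. by apply: measurable_funM; [exact: measurable_ln | exact: measurable_cst]. Qed.

Lemma measurable_R_QMF (R : realType) (h g1 D : R) :
  measurable_fun setT (R_QMF h g1 D).
Proof.
have mlog2D (a : R) : measurable_fun setT (fun g : R => log2 (a + g)).
  by apply: measurableT_comp; [exact: measurable_log2 | exact: measurable_funD].
apply: (measurable_maxr (f := fun g => Num.min _ _) (g := cst 0)) => //.
apply: (measurable_minr (f := fun g => _) (g := fun g => _)); first exact: mlog2D.
exact: measurable_funB (mlog2D _) (measurable_cst _).
Qed.

Lemma measurable_preimageT d d' (T : measurableType d) (U : measurableType d')
    (f : T -> U) (A : set U) :
  measurable_fun setT f -> measurable A -> measurable (f @^-1` A).
Proof. by move=> mf mA; rewrite -[_ @^-1` _]setTI; exact: mf. Qed.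

Lemma measurable_outage_event (R : realType) d (T : measurableType d)
    (G : T -> R) (Rt h g1 D : R) :
  measurable_fun setT G -> measurable [set t | Rt > R_QMF h g1 D (G t)].
Proof.
move=> mG; apply: (measurable_preimageT (f := R_QMF h g1 D \o G) (A := [set` `]-oo, Rt[%R])).
  exact: measurableT_comp (measurable_R_QMF h g1 D) mG.
exact: measurable_itv.
Qed.

Lemma exponential_lt0_null (R : realType) d (T : measurableType d)
    (P : probability T R) (G : T -> R) (lambda : R) :
  (forall A : set R, measurable A -> P (G @^-1` A) = exponential_prob lambda A) ->
  P (G @^-1` [set` `]-oo, 0[%R]) = 0%E.
Proof.
move=> lawG; rewrite lawG //; apply: integral0_eq => x /=.
by rewrite in_itv /= => x_lt0; rewrite lt0_exponential_pdf.
Qed.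

Theorem mainTheorem9 (R : realType) (d : measure_display) (T : measurableType d)
  (P : probability T R) (G : T -> R) (lambda2 Rt h g1 : R) :
  0 < Rt -> 0 < h -> 0 < g1 -> 0 < lambda2 ->
  measurable_fun setT G ->
  (forall A : set R, measurable A ->
     P (G @^-1` A) = exponential_prob lambda2 A) ->
  0 < Delta_star Rt h g1 /\
  g1 ^+ 2 * Delta_star Rt h g1 ^+ 2
    + (g1 ^+ 2 - h ^+ 2 - 2 `^ Rt) * Delta_star Rt h g1 - 2 `^ Rt = 0 /\
  (forall Delta : R, 0 < Delta ->
     (outage P G Rt h g1 (Delta_star Rt h g1) <= outage P G Rt h g1 Delta)%E).
Proof.
move=> Rt_gt0 _ g1_gt0 _ mG lawG.
have g1sq_gt0 : 0 < g1 ^+ 2 by rewrite exprn_gt0.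
have pow_gt0 : 0 < 2 `^ Rt by rewrite powR_gt0.
have Ds_gt0 := pos_quad_root_gt0 (g1 ^+ 2 - h ^+ 2 - 2 `^ Rt) g1sq_gt0 pow_gt0.
have Ds_root := pos_quad_rootE (g1 ^+ 2 - h ^+ 2 - 2 `^ Rt) g1sq_gt0 pow_gt0.
rewrite -Delta_starE in Ds_gt0 Ds_root; split=> //; split=> // D D_gt0.
set N := G @^-1` [set` `]-oo, (0 : R)[%R].
have mN : measurable N by apply: measurable_preimageT; last exact: measurable_itv.
have mOut (x : R) := measurable_outage_event Rt h g1 x mG.
rewrite /outage -(measureU0 (mOut D) mN (exponential_lt0_null lawG)).
apply: le_measure; rewrite ?inE; [exact: mOut | exact: measurableU |].
move=> t /= outDs; have [G_lt0 | G_ge0] := ltP (G t) 0.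
  by right; rewrite /N /= in_itv.
by left; apply: lt_R_QMF_at_crossing outDs.
Qed.
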